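(* Let $G=(V,E)$ be a finite simple undirected graph, $n=|V|$, $G_0:=G$, and let $W_1,\dots,W_r$ be distinct subsets of $V$ such that for every $t\in\{1,\dots,r\}$, $W_t$ is a clique of $G_{t-1}$ with $|W_t|\ge2$ and $G_t:=G_{t-1}\mid W_t$. Let $F_0:=STAB(G)$ and $F_t:=\{x\in STAB(G)\mid x_{W_j}=1,\ j=1,\dots,t\}$. Suppose there is $k>0$ such that for all $t\in\{1,\dots,r\}$: (I) $|W_t|=k$ and the subgraph of $G_{t-1}$ induced by $\bigcup_{i=1}^tW_i$ is $k$-partite with vertex classes $V_t^1,\dots,V_t^k$; (II) $T_t:=(V_t,\mathcal W_t)$, with $V_t:=\bigcup_{i=1}^kV_t^i$ and $\mathcal W_t:=\{W_1,\dots,W_t\}$, is a strong hypertree; (III) for every $w\in V_t^0:=V\setminus V_t$ there exists $i\in\{1,\dots,k\}$ with $N_{G_{t-1}}(w)\cap V_t^i=\emptyset$. Then for all $t\in\{1,\dots,r\}$, the inequality $x_{W_t}\le1$ is facet defining for $F_{t-1}$.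
   Context: For a graph $G=(V,E)$, $\mathcal S(G)\subseteq\{0,1\}^V$ is the set of characteristic vectors of stable sets of $G$, and $STAB(G)=\mathrm{conv}\,\mathcal S(G)$. For $W\subseteq V$ and $x\in\mathbb R^V$, $x_W=\sum_{v\in W}x_v$. $N_H(u)$ is the neighborhood of $u$ in a graph $H$. The clique projection of a clique $W$ ($|W|\ge2$) of a graph $H=(V,E_H)$ is $H\mid W=(V,E_H\cup\{uv\notin E_H\mid u\ne v,\ W\subseteq N_H(u)\cup N_H(v)\})$. A hypergraph $(V_t,\mathcal W_t)$ with all hyperedges of size $k$ is a strong hypertree if either $\mathcal W_t=\{V_t\}$, or there is a vertex $v\in V_t$ incident to a hyperedge $W_i\in\mathcal W_t$ that shares exactly $k-1$ vertices with some other hyperedge, such that $(V_t\setminus\{v\},\mathcal W_t\setminus\{W_i\})$ is again a strong hypertree. An inequality is facet defining for a polytope $P$ if it is valid for $P$ and the face it defines has dimension $\dim P-1$. *)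

From mathcomp Require Import all_boot all_order all_algebra.
Set Implicit Arguments. Unset Strict Implicit. Unset Printing Implicit Defensive.
Import Order.TTheory GRing.Theory Num.Theory.
Local Open Scope ring_scope.

Definition simple_graph (T : finType) (e : rel T) : Prop :=
  (forall u, ~~ e u u) /\ (forall u v, e u v = e v u).

Definition nbhd (T : finType) (e : rel T) (u : T) : {set T} := [set v | e u v].

Definition stable (T : finType) (e : rel T) (A : {set T}) : bool :=
  [forall u in A, forall v in A, ~~ e u v].

Definition clique (T : finType) (e : rel T) (W : {set T}) : bool :=
  [forall u in W, forall v in W, (u != v) ==> e u v].

Definition clique_proj (T : finType) (e : rel T) (W : {set T}) : rel T :=
  fun u v => e u v || ((u != v) && (W \subset nbhd e u :|: nbhd e v)).

(* G_0 = G, G_{t+1} = G_t | W t  (W is 0-indexed: W t is the paper's W_{t+1}) *)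
Fixpoint proj_seq (T : finType) (e : rel T) (W : nat -> {set T}) (t : nat) : rel T :=
  match t with
  | 0 => e
  | t'.+1 => clique_proj (proj_seq e W t') (W t')
  end.

Definition conv_fin (R : realFieldType) (T : finType) (I : finType) (P : pred I)
    (p : I -> T -> R) (x : T -> R) : Prop :=
  exists l : I -> R,
    [/\ forall i, 0 <= l i, \sum_(i | P i) l i = 1 &
        forall v, x v = \sum_(i | P i) l i * p i v].

Definition charvec (R : realFieldType) (T : finType) (A : {set T}) : T -> R :=
  fun v => (v \in A)%:R.

Definition STAB (R : realFieldType) (T : finType) (e : rel T) : (T -> R) -> Prop :=
  conv_fin (fun A : {set T} => stable e A) (@charvec R T).

Definition xsum (R : realFieldType) (T : finType) (x : T -> R) (W : {set T}) : R :=
  \sum_(v in W) x v.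

Definition aff_indep (R : realFieldType) (T : finType) (m : nat) (p : 'I_m -> T -> R) : Prop :=
  forall c : 'I_m -> R, \sum_i c i = 0 -> (forall v, \sum_i c i * p i v = 0) ->
    forall i, c i = 0.

(* the maximal number of affinely independent points of P is m,
   i.e. the affine dimension of P is m - 1 (m = 0 : P empty, dim -1) *)
Definition max_aff (R : realFieldType) (T : finType) (P : (T -> R) -> Prop) (m : nat) : Prop :=
  (exists p : 'I_m -> T -> R, (forall i, P (p i)) /\ aff_indep p) /\
  (forall p : 'I_m.+1 -> T -> R, (forall i, P (p i)) -> ~ aff_indep p).

Definition facet_defining (R : realFieldType) (T : finType) (P : (T -> R) -> Prop)
    (a : T -> R) (b : R) : Prop :=
  (forall x, P x -> \sum_v a v * x v <= b) /\
  exists m, max_aff P m.+1 /\ max_aff (fun x => P x /\ \sum_v a v * x v = b) m.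

Definition k_hypergraph (T : finType) (k : nat) (Vt : {set T}) (Ws : {set {set T}}) : Prop :=
  forall W, W \in Ws -> W \subset Vt /\ #|W| = k.

Inductive strong_hypertree (T : finType) (k : nat) : {set T} -> {set {set T}} -> Prop :=
| sht_base Vt : k_hypergraph k Vt [set Vt] -> strong_hypertree k Vt [set Vt]
| sht_step Vt Ws v Wi :
    k_hypergraph k Vt Ws -> v \in Vt -> Wi \in Ws -> v \in Wi ->
    (exists2 W', (W' \in Ws) && (W' != Wi) & #|Wi :&: W'| = k.-1) ->
    strong_hypertree k (Vt :\ v) (Ws :\ Wi) ->
    strong_hypertree k Vt Ws.

From mathcomp Require Import all_boot all_order all_algebra.
From mathcomp Require Import zify.
Import Order.TTheory GRing.Theory Num.Theory.
Local Open Scope ring_scope.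
Set Implicit Arguments. Unset Strict Implicit.

(* Write [F_s] for the points of STAB(G) with [x_(W j) = 1] for [j < s].
   By induction on [j], every stable set in the support of a point of [F_s]
   meets each [W j], [j < s], in exactly one vertex: it is then stable in
   [G_j], so it meets the clique [W j] at most once, and [x_(W j) = 1] forces
   equality. Hence these sets are stable in [G_s] and [x_(W s) <= 1] is valid.
   The equations are linearly independent because the [W j] are the
   hyperedges of a strong hypertree, so [dim F_s <= n - s]. Conversely the [k]
   classes of (I), together with the sets [w + V i] for [w] outside the
   hypertree and a class [V i] missing the neighbourhood of [w] (III), are
   [n - s] affinely independent points of [F_(s+1)], while the empty set and
   the singletons are [n + 1] such points of [F_0]. Thus [dim F_s = n - s]
   for all [s], and [F_(s+1)] is the face of [F_s] cut out by
   [x_(W s) <= 1]. *)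

Section Graphs.
Variable T : finType.
Implicit Types (H : rel T) (A B : {set T}).

Lemma stableP H A : reflect (forall u v, u \in A -> v \in A -> ~~ H u v) (stable H A).
Proof.
apply: (iffP forall_inP) => [sA u v uA | sA u uA]; first exact: (forall_inP (sA u uA)).
by apply/forall_inP => v; apply: sA.
Qed.

Lemma cliqueP H B :
  reflect (forall u v, u \in B -> v \in B -> u != v -> H u v) (clique H B).
Proof.
apply: (iffP forall_inP) => [cB u v uB vB | cB u uB].
  by apply/implyP; apply: (forall_inP (cB u uB)).
by apply/forall_inP => v vB; apply/implyP; apply: cB.
Qed.

Lemma stable_clique_card H A B : stable H A -> clique H B -> (#|A :&: B| <= 1)%N.
Proof.
move=> /stableP sA /cliqueP cB; rewrite leqNgt; apply/card_gt1P => -[u [v]].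
rewrite !inE => -[/andP [uA uB] /andP [vA vB] uv].
by move: (sA u v uA vA); rewrite cB.
Qed.

Lemma stable_setU1 H A w : ~~ H w w -> (forall u, H u w = H w u) ->
  stable H A -> nbhd H w :&: A = set0 -> stable H (w |: A).
Proof.
move=> Hww Hsym /stableP sA NwA.
have Hw u : u \in A -> ~~ H w u.
  by move=> uA; apply/negP => Hwu; move: (in_set0 u); rewrite -NwA !inE Hwu uA.
apply/stableP => u v; rewrite !inE => /predU1P [-> | uA] /predU1P [-> | vA] //.
- exact: Hw.
- by rewrite Hsym; apply: Hw.
- exact: sA.
Qed.

End Graphs.

Section ProjSeq.
Variables (T : finType) (e : rel T) (W : nat -> {set T}).
Hypothesis se : simple_graph e.

Lemma proj_seq_irr t u : ~~ proj_seq e W t u u.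
Proof.
elim: t => [|t IH] /=; first by case: se.
by rewrite /clique_proj negb_or IH eqxx.
Qed.

Lemma proj_seq_sym t u v : proj_seq e W t u v = proj_seq e W t v u.
Proof.
elim: t u v => [|t IH] u v /=; first by case: se => _ ->.
by rewrite /clique_proj IH eq_sym setUC.
Qed.

Lemma proj_seq_mono t t' u v :
  (t <= t')%N -> proj_seq e W t u v -> proj_seq e W t' u v.
Proof.
by move=> /subnK <-; elim: (t' - t)%N => [|d IH] //= /IH; rewrite /clique_proj => ->.
Qed.

Lemma stable_proj_seq_le t t' A :
  (t <= t')%N -> stable (proj_seq e W t') A -> stable (proj_seq e W t) A.
Proof.
move=> le /stableP sA; apply/stableP => u v uA vA.
by apply: contra (sA u v uA vA); apply: proj_seq_mono.
Qed.

(* If the projection along [W i] joined two vertices of [A], the vertex of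
   [A] in [W i] would be adjacent to one of them. *)
Lemma stable_proj_seq t A : stable e A ->
  (forall i, (i < t)%N -> A :&: W i != set0) -> stable (proj_seq e W t) A.
Proof.
elim: t => [|t IH] //= sA meetW.
have /stableP sAt := IH sA (fun i lt => meetW i (ltnW lt)).
have [w] := set0Pn _ (meetW t (ltnSn t)); rewrite inE => /andP [wA wW].
apply/stableP => u v uA vA; rewrite /clique_proj negb_or sAt //=.
apply/negP => /andP [_ /subsetP /(_ w wW)].
by rewrite !inE (negbTE (sAt u w uA wA)) (negbTE (sAt v w vA wA)).
Qed.

End ProjSeq.

Section Hypertree.
Variables (T : finType) (k : nat).

Lemma strong_hypertree_khyp (Vt : {set T}) Ws :
  strong_hypertree k Vt Ws -> k_hypergraph k Vt Ws.
Proof. by case. Qed.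

Lemma strong_hypertree_card (Vt : {set T}) Ws :
  strong_hypertree k Vt Ws -> (#|Vt| + 1 <= k + #|Ws|)%N.
Proof.
elim=> {Vt Ws} [Vt kh | Vt Ws v Wi _ vV WiW _ _ _ IH].
  by rewrite cards1 (kh Vt (set11 Vt)).2.
by move: IH; rewrite (cardsD1 v Vt) (cardsD1 Wi Ws) vV WiW; lia.
Qed.

(* The vertex removed in a step lies in no other hyperedge, so the
   coefficient of the removed hyperedge vanishes. *)
Lemma strong_hypertree_free (R : fieldType) (Vt : {set T}) Ws : (0 < k)%N ->
  strong_hypertree k Vt Ws ->
  forall c : {set T} -> R, (forall B, B \notin Ws -> c B = 0) ->
  (forall v, \sum_B c B * (v \in B)%:R = 0) -> forall B, c B = 0.
Proof.
move=> k_gt0; elim=> {Vt Ws} [Vt kh | Vt Ws v Wi _ vV WiW vWi _ sh IH] c c0 hc B.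
  have [v vV] : exists v, v \in Vt by apply/card_gt0P; rewrite (kh Vt (set11 Vt)).2.
  have cVt : c Vt = 0.
    move: (hc v); rewrite (bigD1 Vt) //= vV mulr1 big1 ?addr0 // => B' /negbTE nB'.
    by rewrite c0 ?mul0r // inE nB'.
  by case: (eqVneq B Vt) => [-> // | nB]; rewrite c0 // inE nB.
have vB' B' : B' \in Ws :\ Wi -> v \notin B'.
  move=> /(strong_hypertree_khyp sh) [/subsetP sub _].
  by apply: contraTN isT => /sub; rewrite !inE eqxx.
have cWi : c Wi = 0.
  move: (hc v); rewrite (bigD1 Wi) //= vWi mulr1 big1 ?addr0 // => B' nB'.
  have [B'W | /c0 -> ] := boolP (B' \in Ws); last by rewrite mul0r.
  by rewrite (negbTE (vB' B' _)) ?mulr0 // !inE nB'.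
apply: IH hc B => B'; rewrite !inE negb_and negbK => /orP [/eqP -> // | ].
exact: c0.
Qed.

End Hypertree.

Section Charvec.
Variables (R : realFieldType) (T : finType).
Implicit Types (A B : {set T}) (x : T -> R).

Lemma dot_charvec B x : \sum_v charvec R B v * x v = \sum_(v in B) x v.
Proof.
rewrite [RHS]big_mkcond; apply: eq_bigr => v _.
by rewrite /charvec; case: (v \in B); rewrite ?mul1r ?mul0r.
Qed.

Lemma sum_charvec A B : \sum_(v in B) charvec R A v = #|A :&: B|%:R.
Proof.
rewrite -sum1_card natr_sum big_mkcond [RHS]big_mkcond /=.
by apply: eq_bigr => v _; rewrite inE /charvec; case: (v \in A); case: (v \in B).
Qed.

Lemma charvec_STAB (e : rel T) A : stable e A -> STAB e (charvec R A).
Proof.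
move=> sA; exists (fun B => (B == A)%:R); split => [B | | v]; first by rewrite ler0n.
- by rewrite (bigD1 A) //= eqxx big1 ?addr0 // => B /andP [_ /negbTE ->].
- rewrite (bigD1 A) //= eqxx mul1r big1 ?addr0 // => B /andP [_ /negbTE ->].
  by rewrite mul0r.
Qed.

Lemma conv_sum (P : pred {set T}) (l : {set T} -> R) x B :
  (forall v, x v = \sum_(A | P A) l A * charvec R A v) ->
  \sum_(v in B) x v = \sum_(A | P A) l A * #|A :&: B|%:R.
Proof.
move=> lx; rewrite (eq_bigr _ (fun v _ => lx v)) exchange_big /=.
by apply: eq_bigr => A _; rewrite -mulr_sumr sum_charvec.
Qed.

End Charvec.

Section ConvexWeights.
Variables (R : realFieldType) (I : finType) (P : pred I) (l : I -> R) (a : I -> nat).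
Hypothesis l_ge0 : forall i, 0 <= l i.
Hypothesis a_le1 : forall i, P i -> 0 < l i -> (a i <= 1)%N.

Let term_ge0 i : P i -> 0 <= l i * (1 - (a i)%:R).
Proof.
move=> Pi; have [l0 | l_gt0] := eqVneq (l i) 0; first by rewrite l0 mul0r.
rewrite mulr_ge0 // subr_ge0 lern1 a_le1 //.
by rewrite lt_def l_gt0 l_ge0.
Qed.

Let sum_gap : \sum_(i | P i) l i - \sum_(i | P i) l i * (a i)%:R
              = \sum_(i | P i) l i * (1 - (a i)%:R).
Proof. by rewrite -sumrB; apply: eq_bigr => i _; rewrite mulrBr mulr1. Qed.

Lemma convex_sum_le : \sum_(i | P i) l i * (a i)%:R <= \sum_(i | P i) l i.
Proof. by rewrite -subr_ge0 sum_gap sumr_ge0. Qed.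

Lemma convex_sum_eq : \sum_(i | P i) l i * (a i)%:R = \sum_(i | P i) l i ->
  forall i, P i -> 0 < l i -> a i = 1%N.
Proof.
move=> eq_sum i Pi l_gt0.
have /psumr_eq0P gap0 : \sum_(i | P i) l i * (1 - (a i)%:R) = 0.
  by rewrite -sum_gap eq_sum subrr.
move/eqP: (gap0 term_ge0 i Pi); rewrite mulf_eq0 gt_eqF //= subr_eq0.
by rewrite eq_sym pnatr_eq1 => /eqP.
Qed.

End ConvexWeights.

Section AffineIndependence.
Variables (R : realFieldType) (T : finType).

Definition aff_indep_fam (I : finType) (p : I -> T -> R) : Prop :=
  forall c : I -> R, \sum_i c i = 0 -> (forall v, \sum_i c i * p i v = 0) ->
    forall i, c i = 0.

Lemma sum_pushforward (I J : finType) (h : J -> I) (c : J -> R) (F : I -> R) :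
  \sum_i (\sum_(j | h j == i) c j) * F i = \sum_j c j * F (h j).
Proof.
rewrite (partition_big h predT) //=; apply: eq_bigr => i _.
by rewrite mulr_suml; apply: eq_bigr => j /eqP ->.
Qed.

Lemma pushforward_inj (I J : finType) (h : J -> I) (c : J -> R) j0 :
  injective h -> \sum_(j | h j == h j0) c j = c j0.
Proof.
by move=> h_inj; rewrite (big_pred1 j0) // => j; rewrite /= (inj_eq h_inj).
Qed.

Lemma aff_indep_fam_inj (I J : finType) (h : J -> I) (p : I -> T -> R) :
  injective h -> aff_indep_fam p -> aff_indep_fam (fun j => p (h j)).
Proof.
move=> h_inj ai c sum0 comb0 j.
rewrite -(pushforward_inj c j h_inj).
apply: (ai (fun i => \sum_(j' | h j' == i) c j')) => [|v].
  have := sum_pushforward h c (fun=> 1).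
  by under eq_bigr do rewrite mulr1; under [in RHS]eq_bigr do rewrite mulr1; rewrite sum0.
by rewrite sum_pushforward.
Qed.

Lemma aff_indep_fam_ord (I : finType) (p : I -> T -> R) N :
  (N <= #|I|)%N -> aff_indep_fam p ->
  exists h : 'I_N -> I, aff_indep (fun i => p (h i)).
Proof.
move=> le ai; pose h (i : 'I_N) := enum_val (widen_ord le i).
have h_inj : injective h by move=> i j /enum_val_inj [] ij; apply: val_inj.
by exists h; exact: (aff_indep_fam_inj h_inj ai).
Qed.

Lemma aff_indep_fam_disjoint (I : finType) (V : I -> {set T}) :
  (forall i j, i != j -> [disjoint V i & V j]) -> (forall i, V i != set0) ->
  aff_indep_fam (fun i => charvec R (V i)).
Proof.
move=> disj nonempty c _ comb0 i; have /set0Pn [v vV] := nonempty i.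
move: (comb0 v); rewrite (bigD1 i) //= big1 ?addr0 /charvec ?vV ?mulr1 // => j ji.
by rewrite (disjointFl (disj j i ji) vV) mulr0.
Qed.

(* The coordinate [w] is nonzero only in [w |: V (f w)]. *)
Lemma aff_indep_fam_extend (I : finType) (U : {set T}) (V : I -> {set T})
    (f : {w | w \notin U} -> I) :
  (forall i, V i \subset U) -> aff_indep_fam (fun i => charvec R (V i)) ->
  aff_indep_fam (fun x => charvec R
    match x with inl i => V i | inr w => val w |: V (f w) end).
Proof.
move=> VU ai c sum0 comb0.
have notinV (w : {w | w \notin U}) i : (val w \in V i) = false.
  by apply: contraNF (valP w); apply: subsetP.
have c_new w : c (inr w) = 0.
  move: (comb0 (val w)); rewrite big_sumType /= big1 ?add0r => [|i _]; last first.
    by rewrite /charvec notinV mulr0.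
  rewrite (bigD1 w) //= big1 ?addr0 /charvec ?setU11 ?mulr1 // => w' w'w.
  by rewrite !inE notinV orbF val_eqE eq_sym (negbTE w'w) mulr0.
have drop_new F : \sum_x c x * F x = \sum_i c (inl i) * F (inl i).
  by rewrite big_sumType /= [X in _ + X]big1 ?addr0 // => w _; rewrite c_new mul0r.
have c_old : forall i, c (inl i) = 0.
  apply: ai => [|v]; last by have := comb0 v; rewrite drop_new.
  by have := sum0; rewrite big_sumType /= [X in _ + X]big1 ?addr0 //
    => w _; rewrite c_new.
by case.
Qed.

(* The points, lifted by a coordinate [1], are independent rows annihilated
   by the independent columns [(charvec (rows j), -1)]. *)
Lemma aff_indep_card_le N s (p : 'I_N -> T -> R) (rows : 'I_s -> {set T}) :
  (forall i j, \sum_(v in rows j) p i v = 1) ->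
  (forall c : 'I_s -> R, (forall v, \sum_j c j * charvec R (rows j) v = 0) ->
     forall j, c j = 0) ->
  aff_indep p -> (N + s <= #|T| + 1)%N.
Proof.
move=> row_sum rows_free ai.
pose M := row_mx (\matrix_(i < N, j < #|T|) p i (enum_val j))
                 (const_mx 1 : 'M[R]_(N, 1)).
pose B := col_mx (\matrix_(j < #|T|, jj < s) charvec R (rows jj) (enum_val j))
                 (const_mx (-1) : 'M[R]_(1, s)).
have sum_enum (F : T -> R) : \sum_(j < #|T|) F (enum_val j) = \sum_v F v.
  by rewrite (reindex (@enum_val T predT)) //; apply: onW_bij; exact: enum_val_bij.
have MB0 : M *m B = 0.
  rewrite mul_row_col; apply/matrixP => i jj; rewrite !mxE big_ord1 !mxE mul1r.
  under eq_bigr do rewrite !mxE.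
  rewrite (sum_enum (fun v => p i v * charvec R (rows jj) v)).
  under eq_bigr do rewrite mulrC.
  by rewrite dot_charvec row_sum subrr.
have freeM : row_free M.
  apply: inj_row_free => c; rewrite mul_mx_row => /eqP.
  rewrite row_mx_eq0 => /andP [/eqP /matrixP c_p /eqP /matrixP c_1].
  apply/matrixP => a i; rewrite (ord1 a) mxE; apply: ai => [|v].
    have := c_1 0 0; rewrite !mxE => h; apply: etrans h.
    by apply: eq_bigr => j _; rewrite mxE mulr1.
  have := c_p 0 (enum_rank v); rewrite !mxE => h; apply: etrans h.
  by apply: eq_bigr => j _; rewrite mxE enum_rankK.
have freeBT : row_free B^T.
  apply: inj_row_free => c; rewrite tr_col_mx mul_mx_row => /eqP.
  rewrite row_mx_eq0 => /andP [/eqP /matrixP c_rows _].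
  apply/matrixP => a jj; rewrite (ord1 a) mxE; apply: rows_free => v.
  have := c_rows 0 (enum_rank v); rewrite !mxE => h; apply: etrans h.
  by apply: eq_bigr => j _; rewrite !mxE enum_rankK.
have := mulmx0_rank_max MB0.
by rewrite (eqP freeM) -mxrank_tr (eqP freeBT).
Qed.

End AffineIndependence.

Lemma max_aff_eq (R : realFieldType) (T : finType) (P Q : (T -> R) -> Prop) m :
  (forall x, P x <-> Q x) -> max_aff P m -> max_aff Q m.
Proof.
move=> PQ [[p [Pp ai]] upper]; split; first by exists p; split=> // i; apply/PQ.
by move=> q Qq; apply: upper => i; apply/PQ.
Qed.

Section Faces.
Variables (R : realFieldType) (T : finType) (e : rel T) (W : nat -> {set T}).

Definition hits_once s (A : {set T}) := forall j, (j < s)%N -> #|A :&: W j| = 1%N.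

Definition stab_face s (x : T -> R) : Prop :=
  STAB e x /\ forall j, (j < s)%N -> xsum x (W j) = 1.

Lemma stab_faceS s x : stab_face s.+1 x <-> stab_face s x /\ xsum x (W s) = 1.
Proof.
split=> [[Sx eq1] | [[Sx eq1] eq1s]].
  by split; [split=> // j js; apply: eq1; apply: ltnW | apply: eq1].
by split=> // j; rewrite ltnS leq_eqVlt => /predU1P [-> | /eq1].
Qed.

Lemma hits_once_setU1 s A w : (forall j, (j < s)%N -> w \notin W j) ->
  hits_once s A -> hits_once s (w |: A).
Proof.
move=> wW hA j js; rewrite -(hA j js) setIUl.
suff -> : [set w] :&: W j = set0 by rewrite set0U.
by apply/setP => v; rewrite !inE; apply: contraNF (wW j js) => /andP [/eqP <-].
Qed.

Lemma charvec_stab_face s A : stable e A -> hits_once s A -> stab_face s (charvec R A).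
Proof.
move=> sA hA; split; first exact: charvec_STAB.
by move=> j js; rewrite /xsum sum_charvec hA.
Qed.

Lemma stab_face_points s (I : finType) (P : I -> {set T}) N : (N <= #|I|)%N ->
  (forall x, stable e (P x) /\ hits_once s (P x)) ->
  aff_indep_fam (fun x => charvec R (P x)) ->
  exists p : 'I_N -> T -> R, (forall i, stab_face s (p i)) /\ aff_indep p.
Proof.
move=> le good /(aff_indep_fam_ord le) [h ai].
exists (fun i => charvec R (P (h i))); split => // i.
by have [] := good (h i); apply: charvec_stab_face.
Qed.

Lemma stab_face_points_extend s (I : finType) (U : {set T}) (V : I -> {set T})
    (H : rel T) N :
  (forall u, ~~ H u u) -> (forall u v, H u v = H v u) -> subrel e H ->
  (forall i, V i \subset U) -> (forall j, (j < s)%N -> W j \subset U) ->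
  (forall i, stable H (V i) /\ hits_once s (V i)) ->
  (forall w, w \notin U -> exists i, nbhd H w :&: V i == set0) ->
  aff_indep_fam (fun i => charvec R (V i)) -> (N <= #|I| + #|~: U|)%N ->
  exists p : 'I_N -> T -> R, (forall i, stab_face s (p i)) /\ aff_indep p.
Proof.
move=> Hirr Hsym eH VU WU good out ai le.
have stable_e A : stable H A -> stable e A.
  move=> /stableP sA; apply/stableP => u v uA vA.
  by apply: contra (sA u v uA vA); apply: eH.
pose f (w : {w | w \notin U}) := xchoose (out _ (valP w)).
apply: (stab_face_points (I := (I + {w | w \notin U})%type)); last first.
- exact: aff_indep_fam_extend.
- case=> [i | w]; first by have [sV hV] := good i; split => //; apply: stable_e.
  have [sV hV] := good (f w); split.
    by apply/stable_e/stable_setU1 => //; apply/eqP/(xchooseP (out _ (valP w))).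
  apply: hits_once_setU1 hV => j js; apply: contraNN (valP w).
  exact: (subsetP (WU j js)).
- by rewrite card_sum card_sig (eq_card (B := ~: U)) // => v; rewrite !inE.
Qed.

End Faces.

Section Validity.
Variables (R : realFieldType) (T : finType) (e : rel T) (W : nat -> {set T}) (r : nat).
Hypothesis Wclique : forall t, (t < r)%N -> clique (proj_seq e W t) (W t).

Lemma hits_once_card_le1 s A : (s < r)%N -> stable e A -> hits_once W s A ->
  (#|A :&: W s| <= 1)%N.
Proof.
move=> sr sA hA; apply: (stable_clique_card _ (Wclique sr)).
by apply: (stable_proj_seq sA) => i ilt; rewrite -card_gt0 hA.
Qed.

Lemma STAB_support_hits_once s (l : {set T} -> R) (x : T -> R) : (s <= r)%N ->
  (forall A, 0 <= l A) -> \sum_(A | stable e A) l A = 1 ->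
  (forall v, x v = \sum_(A | stable e A) l A * charvec R A v) ->
  (forall j, (j < s)%N -> xsum x (W j) = 1) ->
  forall A, stable e A -> 0 < l A -> hits_once W s A.
Proof.
move=> + l_ge0 l_sum lx; elim: s => [|s IH] sr eq1 A sA lA j //.
have le1 B : stable e B -> 0 < l B -> (#|B :&: W s| <= 1)%N.
  move=> sB lB; apply: hits_once_card_le1 => //.
  by apply: IH sB lB => [|i ilt]; [apply: ltnW | apply/eq1/ltnW].
have hs : hits_once W s A by apply: IH sA lA => [|i ilt]; [apply: ltnW | apply/eq1/ltnW].
rewrite ltnS leq_eqVlt => /predU1P [-> | /hs //].
apply: (convex_sum_eq l_ge0 le1) => //.
by rewrite -(conv_sum _ lx) l_sum; apply: eq1.
Qed.

Lemma stab_face_valid t (x : T -> R) :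
  (t < r)%N -> stab_face e W t x -> xsum x (W t) <= 1.
Proof.
move=> tr [[l [l_ge0 l_sum lx]] eq1].
rewrite /xsum (conv_sum _ lx) -[leRHS]l_sum; apply: convex_sum_le => // A sA lA.
exact/hits_once_card_le1/(STAB_support_hits_once (ltnW tr) l_ge0 l_sum lx eq1).
Qed.

End Validity.

Lemma card_le_sum_cover (I T' : finType) (A : I -> {set T'}) (B : {set T'}) :
  B \subset \bigcup_i A i -> (#|B| <= \sum_i #|A i :&: B|)%N.
Proof.
move=> sub; have BE : B = \bigcup_i (A i :&: B).
  apply/setP => x; apply/idP/bigcupP => [xB | [i _]]; last by case/setIP.
  by have /bigcupP [i _ xi] := subsetP sub x xB; exists i; rewrite ?inE ?xi.
rewrite {1}BE; apply: (big_ind2 (fun (S : {set T'}) n => #|S| <= n)%N).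
- by rewrite cards0.
- by move=> S1 n1 S2 n2 h1 h2; apply: leq_trans (leq_card_setU S1 S2).1 (leq_add h1 h2).
- by [].
Qed.

Section Dimension.
Variables (R : realFieldType) (T : finType) (e : rel T) (W : nat -> {set T}).
Variables (r k : nat).
Hypothesis se : simple_graph e.
Hypothesis W_inj : forall i j, (i < r)%N -> (j < r)%N -> W i = W j -> i = j.
Hypothesis Wclique : forall t, (t < r)%N -> clique (proj_seq e W t) (W t).
Hypothesis k_gt0 : (0 < k)%N.
Hypothesis Wcard : forall t, (t < r)%N -> #|W t| = k.
Hypothesis Wpart : forall t, (t < r)%N ->
  exists Vc : 'I_k -> {set T},
    [/\ \bigcup_(i < k) Vc i = \bigcup_(j < t.+1) W j,
        (forall i i', i != i' -> [disjoint Vc i & Vc i']),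
        (forall i, stable (proj_seq e W t) (Vc i)),
        strong_hypertree k (\bigcup_(i < k) Vc i) [set W j | j : 'I_t.+1]
      & forall w, w \notin \bigcup_(i < k) Vc i ->
          exists i, nbhd (proj_seq e W t) w :&: Vc i = set0].

(* Each of the [k] vertices of the clique [W j] lies in some class, and no
   class contains two of them. *)
Lemma classes_hit_once t (Vc : 'I_k -> {set T}) : (t < r)%N ->
  \bigcup_(i < k) Vc i = \bigcup_(j < t.+1) W j ->
  (forall i, stable (proj_seq e W t) (Vc i)) -> forall i, hits_once W t.+1 (Vc i).
Proof.
move=> tr cover st i j jt; have jr : (j < r)%N by lia.
have le1 i' : (#|Vc i' :&: W j| <= 1)%N.
  apply: (stable_clique_card _ (Wclique jr)).
  by apply: stable_proj_seq_le (st i'); rewrite -ltnS.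
have cover_j : W j \subset \bigcup_(i < k) Vc i.
  by rewrite cover (bigcup_sup (Ordinal jt)).
have cover_sum := card_le_sum_cover cover_j; rewrite Wcard // in cover_sum.
have [sum_le /esym] := leqif_sum (fun i' (_ : true) => leqif_eq (le1 i')).
rewrite sum1_card card_ord in sum_le *.
by rewrite eqn_leq sum_le cover_sum => /forall_inP all1; apply/eqP/all1.
Qed.

Lemma stab_face_aff_lower0 : exists p : 'I_(#|T| - 0).+1 -> T -> R,
  (forall i, stab_face e W 0 (p i)) /\ aff_indep p.
Proof.
have [e_irr e_sym] := se.
apply: (stab_face_points_extend (U := set0) (V := fun _ : 'I_1 => set0) (H := e)) => //.
- by move=> i; split => //; apply/stableP => u v; rewrite inE.
- by move=> w _; exists ord0; rewrite setI0.
- by move=> c sum0 _ i; rewrite (ord1 i); rewrite big_ord1 in sum0.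
- by rewrite setC0 cardsT card_ord subn0.
Qed.

Lemma stab_face_aff_lowerS t : (t < r)%N ->
  exists p : 'I_(#|T| - t.+1).+1 -> T -> R,
    (forall i, stab_face e W t.+1 (p i)) /\ aff_indep p.
Proof.
move=> tr; have [Vc [cover disj st sh out]] := Wpart tr.
set U := \bigcup_(i < k) Vc i in cover sh out.
have hits := classes_hit_once tr cover st.
apply: (stab_face_points_extend (U := U) (V := Vc) (H := proj_seq e W t)).
- exact: proj_seq_irr.
- exact: proj_seq_sym.
- by move=> u v; apply: (proj_seq_mono (t := 0)).
- by move=> i; apply: bigcup_sup.
- by move=> j jt; rewrite cover (bigcup_sup (Ordinal jt)).
- by move=> i; split.
- by move=> w /out [i NwV]; exists i; rewrite NwV.
- apply: aff_indep_fam_disjoint => // i; apply/set0Pn.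
  have /card_gt0P [v /setIP [vV _]] : (0 < #|Vc i :&: W 0|)%N by rewrite hits.
  by exists v.
- have := strong_hypertree_card sh; have := cardsC U; have := k_gt0.
  have : (#|[set W j | j : 'I_t.+1]| <= t.+1)%N.
    by apply: leq_trans (leq_imset_card _ _) _; rewrite card_ord.
  rewrite card_ord; move: #|[set W j | j : 'I_t.+1]| #|U| #|~: U| => a b c; lia.
Qed.

Lemma stab_face_aff_lower s : (s <= r)%N -> exists p : 'I_(#|T| - s).+1 -> T -> R,
  (forall i, stab_face e W s (p i)) /\ aff_indep p.
Proof.
case: s => [_ | t]; [exact: stab_face_aff_lower0 | exact: stab_face_aff_lowerS].
Qed.

Lemma W_free s : (s <= r)%N ->
  forall c : 'I_s -> R, (forall v, \sum_j c j * charvec R (W j) v = 0) ->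
  forall j, c j = 0.
Proof.
case: s => [_ c _ [] // | t tr c comb0 j].
have [Vc [_ _ _ sh _]] := Wpart tr.
have W_inj_ord : injective (fun j : 'I_t.+1 => W j).
  by move=> i i' /W_inj Wii'; apply/val_inj/Wii'; apply: leq_trans tr.
pose c' (B : {set T}) := \sum_(j' : 'I_t.+1 | W j' == B) c j'.
rewrite -(pushforward_inj c j W_inj_ord).
apply: (strong_hypertree_free k_gt0 sh (c := c')).
- move=> B BW; rewrite /c' big1 // => j' /eqP WB.
  by move: BW; rewrite -WB imset_f.
- by move=> v; rewrite /c' (sum_pushforward (fun j : 'I_t.+1 => W j)); apply: comb0.
Qed.

Lemma stab_face_aff_upper s m (p : 'I_m -> T -> R) : (s <= r)%N ->
  (forall i, stab_face e W s (p i)) -> aff_indep p -> (m + s <= #|T| + 1)%N.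
Proof.
move=> sr face ai; apply: (aff_indep_card_le (rows := fun j : 'I_s => W j)) ai.
- by move=> i j; have [_ /(_ j (ltn_ord j))] := face i.
- exact: W_free.
Qed.

Lemma max_aff_stab_face s :
  (s <= r)%N -> max_aff (stab_face (R := R) e W s) (#|T| - s).+1.
Proof.
move=> sr; split; first exact: stab_face_aff_lower.
by move=> p face /(stab_face_aff_upper sr face); lia.
Qed.

Lemma stab_face_constraints_le s : (s <= r)%N -> (s <= #|T|)%N.
Proof.
move=> sr; have [p [face ai]] := stab_face_aff_lower sr.
by have := stab_face_aff_upper sr face ai; lia.
Qed.

End Dimension.

Unset Implicit Arguments.

Theorem theorem2 (R : realFieldType) (T : finType) (e : rel T)
    (r : nat) (W : nat -> {set T}) :
  simple_graph e ->
  (forall i j, (i < r)%N -> (j < r)%N -> W i = W j -> i = j) ->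
  (forall t, (t < r)%N -> clique (proj_seq e W t) (W t) /\ (2 <= #|W t|)%N) ->
  (exists k : nat, (0 < k)%N /\
     forall t, (t < r)%N ->
       #|W t| = k /\
         exists Vc : 'I_k -> {set T},
           [/\ (* (I) k-partite with classes Vc i of the subgraph of G_t
                  induced by W_0 u ... u W_t *)
               \bigcup_(i < k) Vc i = \bigcup_(j < t.+1) W j,
               (forall i i', i != i' -> [disjoint Vc i & Vc i']),
               (forall i, stable (proj_seq e W t) (Vc i)),
               (* (II) *)
               strong_hypertree k (\bigcup_(i < k) Vc i) [set W j | j : 'I_t.+1]
             & (* (III) *)
               forall w, w \notin \bigcup_(i < k) Vc i ->
                 exists i, nbhd (proj_seq e W t) w :&: Vc i = set0]) ->
  forall t, (t < r)%N ->
    facet_defining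
      (fun x : T -> R => STAB e x /\ forall j, (j < t)%N -> xsum x (W j) = 1)
      (charvec R (W t)) 1.
Proof.
move=> se W_inj Wc [k [k_gt0 Wk]] t tr.
have Wclique t' (t'r : (t' < r)%N) := (Wc t' t'r).1.
have Wcard t' (t'r : (t' < r)%N) := (Wk t' t'r).1.
have Wpart t' (t'r : (t' < r)%N) := (Wk t' t'r).2.
have dim := max_aff_stab_face R se W_inj Wclique k_gt0 Wcard Wpart.
have t_lt_n := stab_face_constraints_le R se W_inj Wclique k_gt0 Wcard Wpart tr.
split=> [x face | ].
  by rewrite dot_charvec; exact: (stab_face_valid Wclique tr face).
exists (#|T| - t)%N; split; first exact: dim (ltnW tr).
rewrite -subnSK //; apply: max_aff_eq (dim _ tr) => x.
by rewrite stab_faceS dot_charvec.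
Qed.
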